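(* The assignment $\mathbf{I}:\underline{\mathrm{G}}\to\underline{\mathrm{IN}}$ sending a globally hyperbolic poset $(X,\le)$ to $(\mathbf{I}X,\mathrm{left},\mathrm{right})$, and a morphism $f:X\to Y$ to $\bar f:\mathbf{I}X\to\mathbf{I}Y$, $\bar f([a,b])=[f(a),f(b)]$, is a functor.
   Context: Order notions: directed/filtered sets, suprema $\bigsqcup$, infima $\bigwedge$, the way-below relation $x\ll y$ (for every directed $S$ with a supremum, $y\sqsubseteq\bigsqcup S$ implies $x\sqsubseteq s$ for some $s\in S$), $\Uparrow x=\{a:x\ll a\}$, $\Downarrow x=\{a:a\ll x\}$; a poset is continuous if some subset $B$ has $B\cap\Downarrow x$ containing a directed set with supremum $x$ for every $x$; a continuous dcpo additionally has suprema of all directed sets; $\max(D)$ is the set of maximal elements; the Scott topology consists of upper sets $U$ with $\bigsqcup S\in U\Rightarrow S\cap U\neq\emptyset$ for directed $S$. A continuous poset is bicontinuous if (1) $x\ll y$ iff for every filtered $S$ with an infimum, $\bigwedge S\sqsubseteq x$ implies $s\sqsubseteq y$ for some $s\in S$, and (2) each $\Uparrow x$ is filtered with infimum $x$; its interval topology has basis $\{z: a\ll z\ll b\}$. A globally hyperbolic poset is a bicontinuous poset $(X,\le)$ whose closed intervals $[a,b]=\{z:a\le z\le b\}$ are compact in the interval topology. $\underline{\mathrm{G}}$ is the category whose objects are globally hyperbolic posets and whose arrows are monotone maps continuous for the interval topologies. For such $X$, $\mathbf{I}X=\{[a,b]: a\le b\}$ ordered by reverse inclusion, with $\mathrm{left}([a,b])=[a,a]$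 and $\mathrm{right}([a,b])=[b,b]$. An interval poset is a poset $D$ with maps $\mathrm{left},\mathrm{right}:D\to\max(D)$ such that (writing $\sqcap$ for binary infimum, assumed to exist only where named) $x=\mathrm{left}(x)\sqcap\mathrm{right}(x)$; if $\mathrm{right}(x)=\mathrm{left}(y)$ then $\mathrm{left}(x\sqcap y)=\mathrm{left}(x)$, $\mathrm{right}(x\sqcap y)=\mathrm{right}(y)$; and for $p\in\max(D)$ with $x\sqsubseteq p$, $\mathrm{left}(\mathrm{left}(x)\sqcap p)=\mathrm{left}(x)$, $\mathrm{right}(\mathrm{left}(x)\sqcap p)=p$, $\mathrm{left}(p\sqcap\mathrm{right}(x))=p$, $\mathrm{right}(p\sqcap\mathrm{right}(x))=\mathrm{right}(x)$. Define $a\le b$ on $\max(D)$ iff $a=\mathrm{left}(z),b=\mathrm{right}(z)$ for some $z$; let $[p,\cdot]=\mathrm{left}^{-1}(p)$, $[\cdot,q]=\mathrm{right}^{-1}(q)$. An interval domain is an interval poset with $D$ a continuous dcpo such that: (i) if $p\in\Uparrow x\cap\max(D)$ then $\Uparrow(\mathrm{left}(x)\sqcap p)$ and $\Uparrow(p\sqcap\mathrm{right}(x))$ are nonempty; (ii) for each $x$, TFAE: $\Uparrow x\neq\emptyset$; for all $y\in[\mathrm{left}(x),\cdot]$ with $y\sqsubseteq x$, $y\ll\mathrm{right}(y)$ in the subposet $[\cdot,\mathrm{right}(y)]$; for all $y\in[\cdot,\mathrm{right}(x)]$ with $y\sqsubseteq x$, $y\ll\mathrm{left}(y)$ in the subposet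 $[\mathrm{left}(y),\cdot]$; (iii) for directed $S\subseteq[p,\cdot]$, $\mathrm{left}(\bigsqcup S)=p$ and $\mathrm{right}(\bigsqcup S)=\mathrm{right}(\bigsqcup T)$ for every directed $T\subseteq[q,\cdot]$ with $\mathrm{right}(T)=\mathrm{right}(S)$, and dually for directed $S\subseteq[\cdot,q]$, $\mathrm{right}(\bigsqcup S)=q$ and $\mathrm{left}(\bigsqcup S)=\mathrm{left}(\bigsqcup T)$ for every directed $T\subseteq[\cdot,p]$ with $\mathrm{left}(T)=\mathrm{left}(S)$; (iv) each $\{y\in\max(D):x\sqsubseteq y\}$ is Scott compact. $\underline{\mathrm{IN}}$ is the category of interval domains with arrows the Scott continuous maps $f:D\to E$ satisfying $f\circ\mathrm{left}_D=\mathrm{left}_E\circ f$ and $f\circ\mathrm{right}_D=\mathrm{right}_E\circ f$. *)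

From Stdlib Require Import List.

Definition is_partial_order {T : Type} (le : T -> T -> Prop) : Prop :=
  (forall x, le x x) /\
  (forall x y, le x y -> le y x -> x = y) /\
  (forall x y z, le x y -> le y z -> le x z).

Definition upper_bound {T : Type} (le : T -> T -> Prop) (S : T -> Prop) (u : T) : Prop :=
  forall s, S s -> le s u.
Definition lower_bound {T : Type} (le : T -> T -> Prop) (S : T -> Prop) (u : T) : Prop :=
  forall s, S s -> le u s.

Definition is_sup {T : Type} (le : T -> T -> Prop) (S : T -> Prop) (s : T) : Prop :=
  upper_bound le S s /\ (forall u, upper_bound le S u -> le s u).
Definition is_inf {T : Type} (le : T -> T -> Prop) (S : T -> Prop) (i : T) : Prop :=
  lower_bound le S i /\ (forall u, lower_bound le S u -> le u i).
Definition is_inf2 {T : Type} (le : T -> T -> Prop) (a b m : T) : Prop :=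
  is_inf le (fun z => z = a \/ z = b) m.

Definition directed {T : Type} (le : T -> T -> Prop) (S : T -> Prop) : Prop :=
  (exists x, S x) /\
  (forall x y, S x -> S y -> exists z, S z /\ le x z /\ le y z).
Definition filtered {T : Type} (le : T -> T -> Prop) (S : T -> Prop) : Prop :=
  (exists x, S x) /\
  (forall x y, S x -> S y -> exists z, S z /\ le z x /\ le z y).

Definition way_below {T : Type} (le : T -> T -> Prop) (x y : T) : Prop :=
  forall S, directed le S -> forall s, is_sup le S s -> le y s ->
    exists t, S t /\ le x t.

Definition way_below_in {T : Type} (le : T -> T -> Prop) (P : T -> Prop) (x y : T) : Prop :=
  forall S, (forall z, S z -> P z) -> directed le S ->
    forall s, P s ->
      (upper_bound le S s /\ (forall u, P u -> upper_bound le S u -> le s u)) ->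
      le y s -> exists t, S t /\ le x t.

Definition maximal {T : Type} (le : T -> T -> Prop) (p : T) : Prop :=
  forall y, le p y -> y = p.

Definition continuous_poset {T : Type} (le : T -> T -> Prop) : Prop :=
  is_partial_order le /\
  exists B : T -> Prop, forall x, exists S : T -> Prop,
    (forall s, S s -> B s /\ way_below le s x) /\ directed le S /\ is_sup le S x.

Definition dcpo {T : Type} (le : T -> T -> Prop) : Prop :=
  forall S, directed le S -> exists s, is_sup le S s.

Definition continuous_dcpo {T : Type} (le : T -> T -> Prop) : Prop :=
  continuous_poset le /\ dcpo le.

Definition bicontinuous {T : Type} (le : T -> T -> Prop) : Prop :=
  continuous_poset le /\
  (forall x y, way_below le x y <->
     (forall S, filtered le S -> forall i, is_inf le S i -> le i x ->
        exists s, S s /\ le s y)) /\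
  (forall x, filtered le (fun a => way_below le x a) /\
             is_inf le (fun a => way_below le x a) x).

Definition compact_in {T : Type} (is_open : (T -> Prop) -> Prop) (K : T -> Prop) : Prop :=
  forall (I : Type) (U : I -> T -> Prop),
    (forall i, is_open (U i)) ->
    (forall x, K x -> exists i, U i x) ->
    exists l : list I, forall x, K x -> exists i, In i l /\ U i x.

Definition interval_basic {T : Type} (le : T -> T -> Prop) (a b : T) : T -> Prop :=
  fun z => way_below le a z /\ way_below le z b.
Definition interval_open {T : Type} (le : T -> T -> Prop) (U : T -> Prop) : Prop :=
  forall x, U x -> exists a b, interval_basic le a b x /\
    (forall z, interval_basic le a b z -> U z).

Definition closed_interval {T : Type} (le : T -> T -> Prop) (a b : T) : T -> Prop :=
  fun z => le a z /\ le z b.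

Definition globally_hyperbolic {T : Type} (le : T -> T -> Prop) : Prop :=
  bicontinuous le /\
  forall a b, compact_in (interval_open le) (closed_interval le a b).

Definition monotone {X Y : Type} (leX : X -> X -> Prop) (leY : Y -> Y -> Prop)
  (f : X -> Y) : Prop := forall a b, leX a b -> leY (f a) (f b).

Definition interval_continuous {X Y : Type} (leX : X -> X -> Prop) (leY : Y -> Y -> Prop)
  (f : X -> Y) : Prop :=
  forall U, interval_open leY U -> interval_open leX (fun x => U (f x)).

Definition scott_open {T : Type} (le : T -> T -> Prop) (U : T -> Prop) : Prop :=
  (forall x y, U x -> le x y -> U y) /\
  (forall S s, directed le S -> is_sup le S s -> U s -> exists t, S t /\ U t).
Definition scott_compact {T : Type} (le : T -> T -> Prop) (K : T -> Prop) : Prop :=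
  compact_in (scott_open le) K.
Definition scott_continuous {D E : Type} (leD : D -> D -> Prop) (leE : E -> E -> Prop)
  (f : D -> E) : Prop :=
  forall U, scott_open leE U -> scott_open leD (fun x => U (f x)).

Definition interval_poset {D : Type} (le : D -> D -> Prop) (left right : D -> D) : Prop :=
  is_partial_order le /\
  (forall x, maximal le (left x) /\ maximal le (right x)) /\
  (forall x, is_inf2 le (left x) (right x) x) /\
  (forall x y, right x = left y ->
     exists m, is_inf2 le x y m /\ left m = left x /\ right m = right y) /\
  (forall x p, maximal le p -> le x p ->
     (exists m, is_inf2 le (left x) p m /\ left m = left x /\ right m = p) /\
     (exists m, is_inf2 le p (right x) m /\ left m = p /\ right m = right x)).

Definition interval_domain {D : Type} (le : D -> D -> Prop) (left right : D -> D) : Prop :=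
  interval_poset le left right /\
  continuous_dcpo le /\
  (forall x p, maximal le p -> way_below le x p ->
     (forall m, is_inf2 le (left x) p m -> exists z, way_below le m z) /\
     (forall m, is_inf2 le p (right x) m -> exists z, way_below le m z)) /\
  (forall x,
     ((exists a, way_below le x a) <->
      (forall y, left y = left x -> le y x ->
         way_below_in le (fun z => right z = right y) y (right y))) /\
     ((exists a, way_below le x a) <->
      (forall y, right y = right x -> le y x ->
         way_below_in le (fun z => left z = left y) y (left y)))) /\
  (forall p S s, (forall z, S z -> left z = p) -> directed le S -> is_sup le S s ->
     left s = p /\
     (forall q Tt t, (forall z, Tt z -> left z = q) -> directed le Tt -> is_sup le Tt t ->
        (forall w, (exists z, S z /\ right z = w) <-> (exists z, Tt z /\ right z = w)) ->
        right t = right s)) /\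
  (forall q S s, (forall z, S z -> right z = q) -> directed le S -> is_sup le S s ->
     right s = q /\
     (forall p Tt t, (forall z, Tt z -> right z = p) -> directed le Tt -> is_sup le Tt t ->
        (forall w, (exists z, S z /\ left z = w) <-> (exists z, Tt z /\ left z = w)) ->
        left t = left s)) /\
  (forall x, scott_compact le (fun y => maximal le y /\ le x y)).

Definition IN_morphism {D E : Type} (leD : D -> D -> Prop) (leE : E -> E -> Prop)
  (leftD rightD : D -> D) (leftE rightE : E -> E) (f : D -> E) : Prop :=
  scott_continuous leD leE f /\
  (forall x, f (leftD x) = leftE (f x)) /\
  (forall x, f (rightD x) = rightE (f x)).

(* an element of IX is a closed interval [a,b] with a <= b, represented by (a,b) *)
Definition IX {X : Type} (le : X -> X -> Prop) : Type :=
  { p : X * X | le (fst p) (snd p) }.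

Definition IX_set {X : Type} {le : X -> X -> Prop} (x : IX le) : X -> Prop :=
  closed_interval le (fst (proj1_sig x)) (snd (proj1_sig x)).

(* reverse inclusion *)
Definition IX_le {X : Type} (le : X -> X -> Prop) (x y : IX le) : Prop :=
  forall z, IX_set y z -> IX_set x z.

Definition IX_left {X : Type} (le : X -> X -> Prop) (hr : forall a, le a a)
  (x : IX le) : IX le :=
  exist _ (fst (proj1_sig x), fst (proj1_sig x)) (hr (fst (proj1_sig x))).
Definition IX_right {X : Type} (le : X -> X -> Prop) (hr : forall a, le a a)
  (x : IX le) : IX le :=
  exist _ (snd (proj1_sig x), snd (proj1_sig x)) (hr (snd (proj1_sig x))).

Definition fbar {X Y : Type} (leX : X -> X -> Prop) (leY : Y -> Y -> Prop)
  (f : X -> Y) (hf : monotone leX leY f) (x : IX leX) : IX leY :=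
  exist _ (f (fst (proj1_sig x)), f (snd (proj1_sig x)))
        (hf _ _ (proj2_sig x)).

(* Closed intervals of X are compact in the interval topology and the sets
   {x | ~ a <= x}, {x | ~ x <= b} are interval-open, so every directed subset of X
   that is bounded above has a supremum, and dually for filtered subsets.  Hence a
   directed family of intervals has supremum [sup of left ends, inf of right ends],
   and [a, b] << [c, d] in IX iff a << c and d << b; the intervals [a', b'] with
   a' << a and b << b' approximate [a, b].  Every interval-domain axiom reduces to
   these two descriptions, and the maximal elements above [a, b] are the points of
   the compact interval [a, b].  A monotone interval-continuous f preserves directed
   suprema and filtered infima, so f-bar, acting on both ends, preserves directed
   suprema of intervals and is Scott continuous. *)

From Stdlib Require Import List Classical.
From Stdlib Require Import ProofIrrelevance FunctionalExtensionality PropExtensionality.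

Definition dual {T : Type} (le : T -> T -> Prop) : T -> T -> Prop := fun a b => le b a.

Definition image {A B : Type} (f : A -> B) (S : A -> Prop) : B -> Prop :=
  fun b => exists a, S a /\ f a = b.

Lemma image_comp {A B C : Type} (f : A -> B) (g : B -> C) (S : A -> Prop) :
  image g (image f S) = image (fun a => g (f a)) S.
Proof.
  apply functional_extensionality; intro c; apply propositional_extensionality; split.
  - intros [b [[a [Sa <-]] <-]]. exists a; auto.
  - intros [a [Sa <-]]. exists (f a). split; [exists a|]; auto.
Qed.

Lemma image_const {A B : Type} (f : A -> B) (S : A -> Prop) (a0 : A) (b : B) :
  S a0 -> (forall a, S a -> f a = b) -> image f S = eq b.
Proof.
  intros S0 Hf. apply functional_extensionality; intro c; apply propositional_extensionality; split.
  - intros [a [Sa <-]]. symmetry; auto.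
  - intros <-. exists a0; auto.
Qed.

Lemma directed_image {A B : Type} (leA : A -> A -> Prop) (leB : B -> B -> Prop)
  (f : A -> B) (S : A -> Prop) :
  monotone leA leB f -> directed leA S -> directed leB (image f S).
Proof.
  intros hf [[a0 S0] D]. split.
  - exists (f a0), a0; auto.
  - intros _ _ [a1 [S1 <-]] [a2 [S2 <-]].
    destruct (D a1 a2 S1 S2) as [a3 [S3 [H1 H2]]].
    exists (f a3). split; [exists a3|split; apply hf]; auto.
Qed.

Lemma scott_continuous_of_sup_preserving {D E : Type} (leD : D -> D -> Prop)
  (leE : E -> E -> Prop) (f : D -> E) :
  monotone leD leE f ->
  (forall S s, directed leD S -> is_sup leD S s -> is_sup leE (image f S) (f s)) ->
  scott_continuous leD leE f.
Proof.
  intros hf hsup U [Uup Uin]. split.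
  - intros x y Ux hxy. exact (Uup _ _ Ux (hf _ _ hxy)).
  - intros S s DS Hs Us.
    destruct (Uin _ _ (directed_image _ _ f S hf DS) (hsup S s DS Hs) Us)
      as [_ [[x [Sx <-]] Ux]].
    exists x; auto.
Qed.

Lemma interval_open_or {T : Type} (le : T -> T -> Prop) (U V : T -> Prop) :
  interval_open le U -> interval_open le V -> interval_open le (fun x => U x \/ V x).
Proof.
  intros HU HV x [Ux|Vx].
  - destruct (HU x Ux) as [a [b [Hx Hab]]]. exists a, b; auto.
  - destruct (HV x Vx) as [a [b [Hx Hab]]]. exists a, b; auto.
Qed.

Lemma interval_open_and_const {T : Type} (le : T -> T -> Prop) (P : Prop) (U : T -> Prop) :
  interval_open le U -> interval_open le (fun x => P /\ U x).
Proof.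
  intros HU x [p Ux]. destruct (HU x Ux) as [a [b [Hx Hab]]]. exists a, b; auto.
Qed.

Section PartialOrders.
Context {T : Type} {le : T -> T -> Prop} (po : is_partial_order le).

Lemma le_refl x : le x x.
Proof. exact (proj1 po x). Qed.

Lemma le_antisym x y : le x y -> le y x -> x = y.
Proof. exact (proj1 (proj2 po) x y). Qed.

Lemma le_trans x y z : le x y -> le y z -> le x z.
Proof. exact (proj2 (proj2 po) x y z). Qed.

Lemma dual_partial_order : is_partial_order (dual le).
Proof. unfold dual; split; [|split]; eauto using le_refl, le_antisym, le_trans. Qed.

Lemma directed_singleton y : directed le (eq y).
Proof. split; [exists y; reflexivity|intros _ _ <- <-; exists y; auto using le_refl]. Qed.

Lemma is_sup_singleton y : is_sup le (eq y) y.
Proof. split; [intros _ <-; apply le_refl|intros u Hu; apply Hu; reflexivity]. Qed.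

Lemma is_sup_unique S a b : is_sup le S a -> is_sup le S b -> a = b.
Proof. intros [ua la] [ub lb]. apply le_antisym; auto. Qed.

Lemma way_below_le x y : way_below le x y -> le x y.
Proof.
  intro W.
  destruct (W (eq y) (directed_singleton y) y (is_sup_singleton y) (le_refl y))
    as [t [<- Hxt]].
  exact Hxt.
Qed.

Lemma le_way_below_trans x y z : le x y -> way_below le y z -> way_below le x z.
Proof.
  intros Hxy W S DS s Hs Hzs. destruct (W S DS s Hs Hzs) as [t [St Hyt]].
  exists t; eauto using le_trans.
Qed.

Lemma way_below_le_trans x y z : way_below le x y -> le y z -> way_below le x z.
Proof. intros W Hyz S DS s Hs Hzs. exact (W S DS s Hs (le_trans _ _ _ Hyz Hzs)). Qed.

Lemma directed_finite_upper_bound A a0 :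
  directed le A -> A a0 -> forall l : list T,
  exists k, A k /\ le a0 k /\ forall a, In a l -> A a -> le a k.
Proof.
  intros [_ DA] A0 l. induction l as [|a l [k [Ak [Hk Hl]]]].
  - exists a0. split; [|split]; [exact A0|apply le_refl|intros a []].
  - destruct (classic (A a)) as [Aa|nAa].
    + destruct (DA k a Ak Aa) as [k' [Ak' [H1 H2]]].
      exists k'. split; [|split]; [exact Ak'|eauto using le_trans|].
      intros a' [<-|Ha'] Aa'; eauto using le_trans.
    + exists k. split; [|split]; [exact Ak|exact Hk|].
      intros a' [<-|Ha'] Aa'; [contradiction|auto].
Qed.

End PartialOrders.

Lemma is_inf_unique {T : Type} {le : T -> T -> Prop} (po : is_partial_order le)
  (S : T -> Prop) (a b : T) : is_inf le S a -> is_inf le S b -> a = b.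
Proof. exact (is_sup_unique (dual_partial_order po) S a b). Qed.
Section ContinuousPosets.
Context {T : Type} {le : T -> T -> Prop} (cont : continuous_poset le).
Let po : is_partial_order le := proj1 cont.

Lemma lower_approximants_directed_sup x :
  directed le (fun a => way_below le a x) /\ is_sup le (fun a => way_below le a x) x.
Proof.
  destruct (proj2 cont) as [B HB].
  destruct (HB x) as [S [HS [[[s0 S0] DS] [ubS lubS]]]].
  assert (DS' : directed le S) by (split; [exists s0|]; assumption).
  split; [split|split].
  - exists s0. exact (proj2 (HS s0 S0)).
  - intros y1 y2 W1 W2.
    destruct (W1 S DS' x (conj ubS lubS) (le_refl po x)) as [t1 [St1 H1]].
    destruct (W2 S DS' x (conj ubS lubS) (le_refl po x)) as [t2 [St2 H2]].
    destruct (DS t1 t2 St1 St2) as [t3 [St3 [H13 H23]]].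
    exists t3. split; [exact (proj2 (HS t3 St3))|split; eapply (le_trans po); eassumption].
  - intros s Hs. exact (way_below_le po _ _ Hs).
  - intros u Hu. apply lubS. intros s Ss. apply Hu. exact (proj2 (HS s Ss)).
Qed.

Lemma way_below_interpolate a c :
  way_below le a c -> exists b, way_below le a b /\ way_below le b c.
Proof.
  intro W.
  set (D := fun y => exists z, way_below le y z /\ way_below le z c).
  destruct (lower_approximants_directed_sup c) as [[[z0 Z0] Dc] [_ lubc]].
  assert (DD : directed le D).
  { split.
    - destruct (proj1 (proj1 (lower_approximants_directed_sup z0))) as [y0 Y0].
      exists y0, z0; auto.
    - intros y1 y2 [z1 [Y1 Z1]] [z2 [Y2 Z2]].
      destruct (Dc z1 z2 Z1 Z2) as [z3 [Z3 [H13 H23]]].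
      destruct (proj2 (proj1 (lower_approximants_directed_sup z3)) y1 y2
                  (way_below_le_trans po _ _ _ Y1 H13) (way_below_le_trans po _ _ _ Y2 H23))
        as [y3 [Y3 Hy3]].
      exists y3. split; [exists z3|]; auto. }
  assert (SD : is_sup le D c).
  { split.
    - intros y [z [Y Z]]. apply (le_trans po _ z); apply (way_below_le po); assumption.
    - intros u Hu. apply lubc. intros z Z.
      apply (proj2 (proj2 (lower_approximants_directed_sup z))). intros y Y.
      apply Hu. exists z; auto. }
  destruct (W D DD c SD (le_refl po c)) as [y [[z [Y Z]] Hay]].
  exists z. split; [exact (le_way_below_trans po _ _ _ Hay Y)|exact Z].
Qed.

End ContinuousPosets.

Section BicontinuousPosets.
Context {T : Type} {le : T -> T -> Prop} (bic : bicontinuous le).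
Let cont : continuous_poset le := proj1 bic.
Let po : is_partial_order le := proj1 cont.

Lemma upper_approximants_filtered_inf x :
  filtered le (fun a => way_below le x a) /\ is_inf le (fun a => way_below le x a) x.
Proof. exact (proj2 (proj2 bic) x). Qed.

Lemma way_below_filtered_inf x y :
  way_below le x y -> forall S, filtered le S -> forall i, is_inf le S i -> le i x ->
  exists s, S s /\ le s y.
Proof. exact (proj1 (proj1 (proj2 bic) x y)). Qed.

Lemma way_below_dual_iff x y : way_below (dual le) x y <-> way_below le y x.
Proof.
  split.
  - intro W. apply (proj1 (proj2 bic) y x). exact W.
  - intros W S DS s Hs Hys. exact (way_below_filtered_inf y x W S DS s Hs Hys).
Qed.

Lemma interval_open_dual : interval_open (dual le) = interval_open le.
Proof.
  assert (Hbasic : forall a b z, interval_basic (dual le) a b z <-> interval_basic le b a z).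
  { intros a b z. unfold interval_basic. rewrite !way_below_dual_iff. tauto. }
  apply functional_extensionality; intro U; apply propositional_extensionality.
  split; intros HU x Ux; destruct (HU x Ux) as [a [b [Hx Hab]]]; exists b, a;
    split; [apply Hbasic, Hx| |apply Hbasic, Hx|]; intros z Hz; apply Hab, Hbasic, Hz.
Qed.

Lemma bicontinuous_dual : bicontinuous (dual le).
Proof.
  assert (Hup : forall x, (fun a => way_below (dual le) x a) = (fun a => way_below le a x)).
  { intro x. apply functional_extensionality; intro a; apply propositional_extensionality.
    apply way_below_dual_iff. }
  split; [split|split].
  - exact (dual_partial_order po).
  - exists (fun _ => True). intro x. exists (fun a => way_below le x a).
    split; [|exact (upper_approximants_filtered_inf x)].
    intros s Hs. split; [exact I|apply way_below_dual_iff; exact Hs].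
  - intros x y. rewrite way_below_dual_iff. reflexivity.
  - intro x. rewrite Hup. exact (lower_approximants_directed_sup cont x).
Qed.

Lemma not_above_interval_open a : interval_open le (fun x => ~ le a x).
Proof.
  intros x Hx.
  destruct (classic (exists b, way_below le x b /\ ~ le a b)) as [[b [Hxb Hab]]|Hn].
  - destruct (proj1 (proj1 (lower_approximants_directed_sup cont x))) as [a' Ha'].
    exists a', b. split; [split; assumption|].
    intros z [_ Hzb] Haz. exact (Hab (le_trans po _ _ _ Haz (way_below_le po _ _ Hzb))).
  - exfalso. apply Hx, (proj2 (upper_approximants_filtered_inf x)). intros b Hxb.
    apply NNPP. intro Hab. exact (Hn (ex_intro _ b (conj Hxb Hab))).
Qed.

End BicontinuousPosets.

Lemma not_below_interval_open {T : Type} {le : T -> T -> Prop} (bic : bicontinuous le) b :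
  interval_open le (fun x => ~ le x b).
Proof.
  rewrite <- (interval_open_dual bic).
  exact (not_above_interval_open (bicontinuous_dual bic) b).
Qed.

Section GloballyHyperbolicPosets.
Context {T : Type} {le : T -> T -> Prop} (gh : globally_hyperbolic le).
Let bic : bicontinuous le := proj1 gh.
Let po : is_partial_order le := proj1 (proj1 bic).

Lemma globally_hyperbolic_dual : globally_hyperbolic (dual le).
Proof.
  split; [exact (bicontinuous_dual bic)|].
  intros a b. rewrite (interval_open_dual bic).
  replace (closed_interval (dual le) a b) with (closed_interval le b a); [exact (proj2 gh b a)|].
  apply functional_extensionality; intro z; apply propositional_extensionality.
  unfold closed_interval, dual. tauto.
Qed.

(* If A had no supremum, the sets {x | ~ a <= x} (a in A) and {x | ~ x <= u}
   (u an upper bound of A) would cover the compact interval [a0, b]; an upper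
   bound in A of the finitely many a of a subcover is covered by none of them. *)
Lemma bounded_directed_has_sup A a0 b :
  directed le A -> A a0 -> (forall a, A a -> le a b) -> exists e, is_sup le A e.
Proof.
  intros DA A0 Hb. apply NNPP. intro Hno.
  set (U := fun i x => (A i /\ ~ le i x) \/ (upper_bound le A i /\ ~ le x i)).
  destruct (proj2 gh a0 b T U) as [l Hl].
  - intro i. apply interval_open_or; apply interval_open_and_const;
      [exact (not_above_interval_open bic i)|exact (not_below_interval_open bic i)].
  - intros x _. destruct (classic (upper_bound le A x)) as [Hub|Hnub].
    + destruct (not_all_ex_not _ _ (fun h => Hno (ex_intro _ x (conj Hub h)))) as [u Hu].
      exists u. right. exact (imply_to_and _ _ Hu).
    + destruct (not_all_ex_not _ _ Hnub) as [s Hs].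
      exists s. left. exact (imply_to_and _ _ Hs).
  - destruct (directed_finite_upper_bound po A a0 DA A0 l) as [k [Ak [Hk Hkl]]].
    destruct (Hl k (conj Hk (Hb k Ak))) as [i [Hi [[Ai Hn]|[Hu Hn]]]].
    + exact (Hn (Hkl i Hi Ai)).
    + exact (Hn (Hu k Ak)).
Qed.

End GloballyHyperbolicPosets.

Lemma bounded_filtered_has_inf {T : Type} {le : T -> T -> Prop} (gh : globally_hyperbolic le)
  B b0 a : filtered le B -> B b0 -> (forall b, B b -> le a b) -> exists f, is_inf le B f.
Proof. exact (bounded_directed_has_sup (globally_hyperbolic_dual gh) B b0 a). Qed.

Section IntervalContinuousMaps.
Context {X Y : Type} {leX : X -> X -> Prop} {leY : Y -> Y -> Prop}
  (contX : continuous_poset leX) (ghY : globally_hyperbolic leY)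
  (f : X -> Y) (hf : monotone leX leY f) (hc : interval_continuous leX leY f).

(* If f e were not below the supremum E of f(A), the open set {y | ~ y <= E}
   would pull back to a neighbourhood a' << e << b' of e, and interpolating
   a' << a'' << e finds a in A inside that neighbourhood. *)
Lemma interval_continuous_preserves_sup A e :
  directed leX A -> is_sup leX A e -> is_sup leY (image f A) (f e).
Proof.
  intros DA [ubA lubA].
  assert (poX := proj1 contX). assert (poY := proj1 (proj1 (proj1 ghY))).
  assert (ub : upper_bound leY (image f A) (f e)).
  { intros y [a [Aa <-]]. exact (hf _ _ (ubA a Aa)). }
  destruct (proj1 DA) as [a0 A0].
  destruct (bounded_directed_has_sup ghY (image f A) (f a0) (f e)
              (directed_image _ _ f A hf DA) (ex_intro _ a0 (conj A0 eq_refl)) ub)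
    as [E [ubE lubE]].
  assert (HeE : leY (f e) E).
  { apply NNPP. intro Hn.
    destruct (hc _ (not_below_interval_open (proj1 ghY) E) e Hn) as [a' [b' [[Ha' Hb'] Hsub]]].
    destruct (way_below_interpolate contX _ _ Ha') as [a'' [W1 W2]].
    destruct (W2 A DA e (conj ubA lubA) (le_refl poX e)) as [a [Aa Ha]].
    apply (Hsub a).
    - split; [exact (way_below_le_trans poX _ _ _ W1 Ha)|].
      exact (le_way_below_trans poX _ _ _ (ubA a Aa) Hb').
    - apply ubE. exists a; auto. }
  split; [exact ub|].
  intros u Hu. exact (le_trans poY _ _ _ HeE (lubE u Hu)).
Qed.

End IntervalContinuousMaps.

Lemma interval_continuous_preserves_inf {X Y : Type} {leX : X -> X -> Prop}
  {leY : Y -> Y -> Prop} (bicX : bicontinuous leX) (ghY : globally_hyperbolic leY)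
  (f : X -> Y) (hf : monotone leX leY f) (hc : interval_continuous leX leY f) A e :
  filtered leX A -> is_inf leX A e -> is_inf leY (image f A) (f e).
Proof.
  apply (interval_continuous_preserves_sup (proj1 (bicontinuous_dual bicX))
           (globally_hyperbolic_dual ghY) f).
  - intros a b h. exact (hf b a h).
  - unfold interval_continuous.
    rewrite (interval_open_dual bicX), (interval_open_dual (proj1 ghY)). exact hc.
Qed.
Section Intervals.
Context {X : Type} {le : X -> X -> Prop}.

Definition IX_lo (x : IX le) : X := fst (proj1_sig x).
Definition IX_hi (x : IX le) : X := snd (proj1_sig x).
Definition IX_mk (a b : X) (h : le a b) : IX le := exist _ (a, b) h.

Definition IX_box (A B : X -> Prop) : IX le -> Prop := fun z => A (IX_lo z) /\ B (IX_hi z).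

Definition IX_approximants (y : IX le) : IX le -> Prop :=
  IX_box (fun a => way_below le a (IX_lo y)) (fun b => way_below le (IX_hi y) b).

Lemma IX_lo_hi x : le (IX_lo x) (IX_hi x).
Proof. exact (proj2_sig x). Qed.

Lemma IX_eq x y : IX_lo x = IX_lo y -> IX_hi x = IX_hi y -> x = y.
Proof.
  destruct x as [[a b] h], y as [[c d] h']. unfold IX_lo, IX_hi; simpl. intros -> ->.
  f_equal. apply proof_irrelevance.
Qed.

Lemma IX_left_eq_iff hr x y : IX_left le hr x = IX_left le hr y <-> IX_lo x = IX_lo y.
Proof. split; [exact (f_equal IX_lo (x := _) (y := _))|intro E; apply IX_eq; exact E]. Qed.

Lemma IX_right_eq_iff hr x y : IX_right le hr x = IX_right le hr y <-> IX_hi x = IX_hi y.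
Proof. split; [exact (f_equal IX_lo (x := _) (y := _))|intro E; apply IX_eq; exact E]. Qed.

Section IntervalsOfPoset.
Hypothesis po : is_partial_order le.

Definition IX_point (a : X) : IX le := IX_mk a a (le_refl po a).

Lemma IX_le_iff x y :
  IX_le le x y <-> le (IX_lo x) (IX_lo y) /\ le (IX_hi y) (IX_hi x).
Proof.
  unfold IX_le, IX_set, closed_interval. fold (IX_lo x) (IX_hi x) (IX_lo y) (IX_hi y). split.
  - intro Hs. split.
    + apply (Hs (IX_lo y)). split; [apply (le_refl po)|apply IX_lo_hi].
    + apply (Hs (IX_hi y)). split; [apply IX_lo_hi|apply (le_refl po)].
  - intros [h1 h2] z [z1 z2]. split; eapply (le_trans po); eassumption.
Qed.

Lemma IX_partial_order : is_partial_order (IX_le le).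
Proof.
  split; [|split].
  - intros x z h; exact h.
  - intros x y h1 h2. apply IX_le_iff in h1, h2.
    apply IX_eq; apply (le_antisym po); tauto.
  - intros x y z h1 h2 w hw. exact (h1 w (h2 w hw)).
Qed.

Lemma IX_lo_monotone : monotone (IX_le le) le IX_lo.
Proof. intros x y h. exact (proj1 (proj1 (IX_le_iff x y) h)). Qed.

Lemma IX_hi_antitone : monotone (IX_le le) (dual le) IX_hi.
Proof. intros x y h. exact (proj2 (proj1 (IX_le_iff x y) h)). Qed.

Lemma IX_maximal_iff y : maximal (IX_le le) y <-> IX_lo y = IX_hi y.
Proof.
  split.
  - intro M. rewrite <- (M (IX_point (IX_lo y))); [reflexivity|].
    apply IX_le_iff. split; [apply (le_refl po)|apply IX_lo_hi].
  - intros E w Hw. apply IX_le_iff in Hw. destruct Hw as [h1 h2].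
    pose proof (IX_lo_hi w) as h3.
    apply IX_eq; apply (le_antisym po); try assumption; [rewrite E|rewrite <- E];
      eapply (le_trans po); eassumption.
Qed.

Lemma IX_inf2_span x y m :
  le (IX_lo x) (IX_lo y) -> le (IX_hi x) (IX_hi y) ->
  IX_lo m = IX_lo x -> IX_hi m = IX_hi y -> is_inf2 (IX_le le) x y m.
Proof.
  intros Hlo Hhi Em Fm. split.
  - intros z [->| ->]; apply IX_le_iff; rewrite Em, Fm;
      split; first [assumption|apply (le_refl po)].
  - intros u Hu. destruct (proj1 (IX_le_iff _ _) (Hu x (or_introl eq_refl))) as [h1 _].
    destruct (proj1 (IX_le_iff _ _) (Hu y (or_intror eq_refl))) as [_ h2].
    apply IX_le_iff. rewrite Em, Fm. auto.
Qed.

Lemma IX_interval_poset hr : interval_poset (IX_le le) (IX_left le hr) (IX_right le hr).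
Proof.
  split; [exact IX_partial_order|split; [|split; [|split]]].
  - intro x. split; apply IX_maximal_iff; reflexivity.
  - intro x. apply IX_inf2_span; try reflexivity; exact (IX_lo_hi x).
  - intros x y E.
    assert (E' : IX_hi x = IX_lo y) by exact (f_equal IX_lo E).
    assert (h : le (IX_lo x) (IX_hi y)).
    { apply (le_trans po _ (IX_hi x)); [|rewrite E']; apply IX_lo_hi. }
    exists (IX_mk _ _ h). split; [|split; apply IX_eq; reflexivity].
    apply IX_inf2_span; [rewrite <- E'|rewrite E'|reflexivity|reflexivity]; apply IX_lo_hi.
  - intros x p Mp Hxp. apply IX_maximal_iff in Mp. apply IX_le_iff in Hxp.
    destruct Hxp as [h1 h2].
    assert (h3 : le (IX_lo p) (IX_hi x)) by (rewrite Mp; exact h2).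
    split.
    + exists (IX_mk _ _ h1).
      split; [|split; apply IX_eq; simpl; auto].
      apply IX_inf2_span; simpl; auto. rewrite <- Mp. exact h1.
    + exists (IX_mk _ _ h3).
      split; [|split; apply IX_eq; simpl; auto].
      apply IX_inf2_span; simpl; auto.
Qed.

Lemma IX_sup_of_components S s :
  is_sup le (image IX_lo S) (IX_lo s) -> is_inf le (image IX_hi S) (IX_hi s) ->
  is_sup (IX_le le) S s.
Proof.
  intros [ubl lubl] [lbh glbh]. split.
  - intros z Sz. apply IX_le_iff. split; [apply ubl|apply lbh]; exists z; auto.
  - intros u Hu. apply IX_le_iff. split.
    + apply lubl. intros _ [z [Sz <-]]. exact (IX_lo_monotone _ _ (Hu z Sz)).
    + apply glbh. intros _ [z [Sz <-]]. exact (IX_hi_antitone _ _ (Hu z Sz)).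
Qed.

Lemma IX_box_directed_sup A B s :
  directed le A -> is_sup le A (IX_lo s) -> filtered le B -> is_inf le B (IX_hi s) ->
  (forall a b, A a -> B b -> le a b) ->
  directed (IX_le le) (IX_box A B) /\ is_sup (IX_le le) (IX_box A B) s.
Proof.
  intros [[a0 A0] DA] SA [[b0 B0] FB] IB hAB.
  split; [split|].
  - exists (IX_mk a0 b0 (hAB a0 b0 A0 B0)). split; assumption.
  - intros z1 z2 [A1 B1] [A2 B2].
    destruct (DA _ _ A1 A2) as [a3 [A3 [H1 H2]]].
    destruct (FB _ _ B1 B2) as [b3 [B3 [K1 K2]]].
    exists (IX_mk a3 b3 (hAB a3 b3 A3 B3)). split; [split; assumption|].
    split; apply IX_le_iff; split; assumption.
  - apply IX_sup_of_components.
    + replace (image IX_lo (IX_box A B)) with A; [exact SA|].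
      apply functional_extensionality; intro a; apply propositional_extensionality. split.
      * intro Aa. exists (IX_mk a b0 (hAB a b0 Aa B0)). split; [split|]; auto.
      * intros [z [[Az _] <-]]. exact Az.
    + replace (image IX_hi (IX_box A B)) with B; [exact IB|].
      apply functional_extensionality; intro b; apply propositional_extensionality. split.
      * intro Bb. exists (IX_mk a0 b (hAB a0 b A0 Bb)). split; [split|]; auto.
      * intros [z [[_ Bz] <-]]. exact Bz.
Qed.

End IntervalsOfPoset.

Section IntervalsOfGloballyHyperbolic.
Hypothesis gh : globally_hyperbolic le.
Let bic : bicontinuous le := proj1 gh.
Let cont : continuous_poset le := proj1 bic.
Let po : is_partial_order le := proj1 cont.
Let IX_po : is_partial_order (IX_le le) := IX_partial_order po.

Lemma IX_directed_componentwise_sup S :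
  directed (IX_le le) S ->
  exists s, is_sup le (image IX_lo S) (IX_lo s) /\ is_inf le (image IX_hi S) (IX_hi s).
Proof.
  intro DS. destruct (proj1 DS) as [z0 S0].
  assert (AB : forall a b, image IX_lo S a -> image IX_hi S b -> le a b).
  { intros _ _ [z1 [S1 <-]] [z2 [S2 <-]]. destruct (proj2 DS z1 z2 S1 S2) as [z3 [S3 [H1 H2]]].
    apply (le_trans po _ (IX_lo z3)); [exact (IX_lo_monotone po _ _ H1)|].
    apply (le_trans po _ (IX_hi z3)); [apply IX_lo_hi|exact (IX_hi_antitone po _ _ H2)]. }
  destruct (bounded_directed_has_sup gh _ (IX_lo z0) (IX_hi z0)
              (directed_image _ _ _ S (IX_lo_monotone po) DS) (ex_intro _ z0 (conj S0 eq_refl)))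
    as [e He].
  { intros a Ha. apply AB; [exact Ha|exists z0; auto]. }
  destruct (bounded_filtered_has_inf gh _ (IX_hi z0) (IX_lo z0)
              (directed_image _ _ _ S (IX_hi_antitone po) DS) (ex_intro _ z0 (conj S0 eq_refl)))
    as [f Hf].
  { intros b Hb. apply AB; [exists z0; auto|exact Hb]. }
  assert (hef : le e f).
  { apply (proj2 Hf). intros b Hb. apply (proj2 He). intros a Ha. exact (AB a b Ha Hb). }
  exists (IX_mk e f hef). split; assumption.
Qed.

Lemma IX_sup_components S s :
  directed (IX_le le) S -> is_sup (IX_le le) S s ->
  is_sup le (image IX_lo S) (IX_lo s) /\ is_inf le (image IX_hi S) (IX_hi s).
Proof.
  intros DS Hs. destruct (IX_directed_componentwise_sup S DS) as [s0 [Hlo Hhi]].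
  rewrite (is_sup_unique IX_po S s s0 Hs (IX_sup_of_components po S s0 Hlo Hhi)). auto.
Qed.

Lemma IX_approximants_directed_sup y :
  directed (IX_le le) (IX_approximants y) /\ is_sup (IX_le le) (IX_approximants y) y.
Proof.
  destruct (lower_approximants_directed_sup cont (IX_lo y)) as [DA SA].
  destruct (upper_approximants_filtered_inf bic (IX_hi y)) as [FB IB].
  apply IX_box_directed_sup; try assumption.
  intros a b Ha Hb. apply (le_trans po _ (IX_lo y)); [exact (way_below_le po _ _ Ha)|].
  apply (le_trans po _ (IX_hi y)); [apply IX_lo_hi|exact (way_below_le po _ _ Hb)].
Qed.

Lemma IX_way_below_iff x y :
  way_below (IX_le le) x y <->
  way_below le (IX_lo x) (IX_lo y) /\ way_below le (IX_hi y) (IX_hi x).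
Proof.
  split.
  - intro W. destruct (IX_approximants_directed_sup y) as [D Sy].
    destruct (W _ D y Sy (le_refl IX_po y)) as [z [[Az Bz] Hxz]].
    split.
    + exact (le_way_below_trans po _ _ _ (IX_lo_monotone po _ _ Hxz) Az).
    + exact (way_below_le_trans po _ _ _ Bz (IX_hi_antitone po _ _ Hxz)).
  - intros [Wl Wh] S DS s Hs Hys.
    destruct (IX_sup_components S s DS Hs) as [SA IB].
    destruct (Wl _ (directed_image _ _ _ S (IX_lo_monotone po) DS) _ SA
                 (IX_lo_monotone po _ _ Hys)) as [_ [[z1 [S1 <-]] K1]].
    destruct (way_below_filtered_inf bic _ _ Wh _ (directed_image _ _ _ S (IX_hi_antitone po) DS)
                _ IB (IX_hi_antitone po _ _ Hys)) as [_ [[z2 [S2 <-]] K2]].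
    destruct (proj2 DS z1 z2 S1 S2) as [z3 [S3 [H1 H2]]].
    exists z3. split; [exact S3|]. apply (IX_le_iff po). split.
    + exact (le_trans po _ _ _ K1 (IX_lo_monotone po _ _ H1)).
    + exact (le_trans po _ _ _ (IX_hi_antitone po _ _ H2) K2).
Qed.

Lemma IX_continuous_dcpo : continuous_dcpo (IX_le le).
Proof.
  split.
  - split; [exact IX_po|]. exists (fun _ => True). intro x. exists (IX_approximants x).
    split; [|exact (IX_approximants_directed_sup x)].
    intros s Hs. split; [exact I|apply IX_way_below_iff; exact Hs].
  - intros S DS. destruct (IX_directed_componentwise_sup S DS) as [s [Hlo Hhi]].
    exists s. exact (IX_sup_of_components po S s Hlo Hhi).
Qed.

Lemma IX_way_above_iff x :
  (exists a, way_below (IX_le le) x a) <-> way_below le (IX_lo x) (IX_hi x).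
Proof.
  split.
  - intros [z W]. apply IX_way_below_iff in W. destruct W as [W1 W2].
    apply (way_below_le_trans po _ _ _ W1).
    apply (le_trans po _ (IX_hi z)); [apply IX_lo_hi|exact (way_below_le po _ _ W2)].
  - intro W. destruct (way_below_interpolate cont _ _ W) as [c [W1 W2]].
    exists (IX_point po c). apply IX_way_below_iff. split; assumption.
Qed.

Lemma IX_way_below_maximal_meets hr x p :
  maximal (IX_le le) p -> way_below (IX_le le) x p ->
  (forall m, is_inf2 (IX_le le) (IX_left le hr x) p m -> exists z, way_below (IX_le le) m z) /\
  (forall m, is_inf2 (IX_le le) p (IX_right le hr x) m -> exists z, way_below (IX_le le) m z).
Proof.
  intros Mp W. apply (IX_maximal_iff po) in Mp. apply IX_way_below_iff in W.
  destruct W as [W1 W2].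
  split; intros m [lbm _]; apply IX_way_above_iff;
    pose proof (lbm _ (or_introl eq_refl)) as Hm1; pose proof (lbm _ (or_intror eq_refl)) as Hm2.
  - apply (le_way_below_trans po _ _ _ (IX_lo_monotone po _ _ Hm1)).
    apply (way_below_le_trans po _ _ _ W1). rewrite Mp. exact (IX_hi_antitone po _ _ Hm2).
  - apply (le_way_below_trans po _ _ _ (IX_lo_monotone po _ _ Hm1)). rewrite Mp.
    exact (way_below_le_trans po _ _ _ W2 (IX_hi_antitone po _ _ Hm2)).
Qed.

Lemma IX_right_fibre_way_below_iff hr y :
  way_below_in (IX_le le) (fun z => IX_right le hr z = IX_right le hr y) y (IX_right le hr y)
  <-> way_below le (IX_lo y) (IX_hi y).
Proof.
  split.
  - intro W.
    destruct (lower_approximants_directed_sup cont (IX_hi y)) as [DA SA].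
    destruct (IX_box_directed_sup po _ (eq (IX_hi y)) (IX_right le hr y) DA SA
                (directed_singleton (dual_partial_order po) _)
                (is_sup_singleton (dual_partial_order po) _)) as [D Ssup].
    { intros a _ Ha <-. exact (way_below_le po _ _ Ha). }
    destruct (W _ (fun z Hz => proj2 (IX_right_eq_iff hr z y) (eq_sym (proj2 Hz))) D
                (IX_right le hr y) eq_refl (conj (proj1 Ssup) (fun u _ => proj2 Ssup u))
                (le_refl IX_po _)) as [t [[Ht _] Hyt]].
    exact (le_way_below_trans po _ _ _ (IX_lo_monotone po _ _ Hyt) Ht).
  - intros W S HS DS s Ps [_ lubs] Hys.
    assert (Hhi : forall z, S z -> IX_hi z = IX_hi y).
    { intros z Sz. apply (IX_right_eq_iff hr), HS, Sz. }
    destruct (proj1 DS) as [z0 S0].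
    destruct (proj2 IX_continuous_dcpo S DS) as [s0 Hs0].
    destruct (IX_sup_components S s0 DS Hs0) as [Hlo Hhi0].
    rewrite (image_const IX_hi S z0 (IX_hi y) S0 Hhi) in Hhi0.
    assert (E : IX_hi s0 = IX_hi y).
    { exact (is_inf_unique po _ _ _ Hhi0 (is_sup_singleton (dual_partial_order po) _)). }
    assert (Hss0 : IX_le le s s0).
    { apply lubs; [apply (IX_right_eq_iff hr), E|exact (proj1 Hs0)]. }
    assert (W' : way_below le (IX_lo y) (IX_lo s0)).
    { apply (way_below_le_trans po _ _ _ W), (le_trans po _ (IX_lo s)).
      - exact (IX_lo_monotone po _ _ Hys).
      - exact (IX_lo_monotone po _ _ Hss0). }
    destruct (W' _ (directed_image _ _ _ S (IX_lo_monotone po) DS) _ Hlo (le_refl po _))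
      as [_ [[z [Sz <-]] Hz]].
    exists z. split; [exact Sz|]. apply (IX_le_iff po). rewrite (Hhi z Sz).
    split; [exact Hz|apply (le_refl po)].
Qed.

Lemma IX_left_fibre_way_below_iff hr y :
  way_below_in (IX_le le) (fun z => IX_left le hr z = IX_left le hr y) y (IX_left le hr y)
  <-> way_below le (IX_lo y) (IX_hi y).
Proof.
  split.
  - intro W.
    destruct (upper_approximants_filtered_inf bic (IX_lo y)) as [FB IB].
    destruct (IX_box_directed_sup po (eq (IX_lo y)) _ (IX_left le hr y)
                (directed_singleton po _) (is_sup_singleton po _) FB IB) as [D Ssup].
    { intros _ b <- Hb. exact (way_below_le po _ _ Hb). }
    destruct (W _ (fun z Hz => proj2 (IX_left_eq_iff hr z y) (eq_sym (proj1 Hz))) D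
                (IX_left le hr y) eq_refl (conj (proj1 Ssup) (fun u _ => proj2 Ssup u))
                (le_refl IX_po _)) as [t [[_ Ht] Hyt]].
    exact (way_below_le_trans po _ _ _ Ht (IX_hi_antitone po _ _ Hyt)).
  - intros W S HS DS s Ps [_ lubs] Hys.
    assert (Hlo : forall z, S z -> IX_lo z = IX_lo y).
    { intros z Sz. apply (IX_left_eq_iff hr), HS, Sz. }
    destruct (proj1 DS) as [z0 S0].
    destruct (proj2 IX_continuous_dcpo S DS) as [s0 Hs0].
    destruct (IX_sup_components S s0 DS Hs0) as [Hlo0 Hhi].
    rewrite (image_const IX_lo S z0 (IX_lo y) S0 Hlo) in Hlo0.
    assert (E : IX_lo s0 = IX_lo y).
    { exact (is_sup_unique po _ _ _ Hlo0 (is_sup_singleton po _)). }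
    assert (Hss0 : IX_le le s s0).
    { apply lubs; [apply (IX_left_eq_iff hr), E|exact (proj1 Hs0)]. }
    assert (Hs0y : le (IX_hi s0) (IX_lo y)).
    { apply (le_trans po _ (IX_hi s)).
      - exact (IX_hi_antitone po _ _ Hss0).
      - exact (IX_hi_antitone po _ _ Hys). }
    destruct (way_below_filtered_inf bic _ _ W _ (directed_image _ _ _ S (IX_hi_antitone po) DS)
                _ Hhi Hs0y) as [_ [[z [Sz <-]] Hz]].
    exists z. split; [exact Sz|]. apply (IX_le_iff po). rewrite (Hlo z Sz).
    split; [apply (le_refl po)|exact Hz].
Qed.

Lemma IX_sup_of_left_fibre hr p S s :
  (forall z, S z -> IX_left le hr z = p) -> directed (IX_le le) S ->
  is_sup (IX_le le) S s -> IX_left le hr s = p.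
Proof.
  intros HS DS Hs. destruct (proj1 DS) as [z0 S0].
  destruct (IX_sup_components S s DS Hs) as [Hlo _].
  rewrite (image_const IX_lo S z0 (IX_lo z0) S0) in Hlo.
  - rewrite <- (HS z0 S0). apply (IX_left_eq_iff hr).
    exact (is_sup_unique po _ _ _ Hlo (is_sup_singleton po _)).
  - intros z Sz. apply (IX_left_eq_iff hr). rewrite (HS z Sz), (HS z0 S0). reflexivity.
Qed.

Lemma IX_sup_of_right_fibre hr q S s :
  (forall z, S z -> IX_right le hr z = q) -> directed (IX_le le) S ->
  is_sup (IX_le le) S s -> IX_right le hr s = q.
Proof.
  intros HS DS Hs. destruct (proj1 DS) as [z0 S0].
  destruct (IX_sup_components S s DS Hs) as [_ Hhi].
  rewrite (image_const IX_hi S z0 (IX_hi z0) S0) in Hhi.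
  - rewrite <- (HS z0 S0). apply (IX_right_eq_iff hr).
    exact (is_inf_unique po _ _ _ Hhi (is_sup_singleton (dual_partial_order po) _)).
  - intros z Sz. apply (IX_right_eq_iff hr). rewrite (HS z Sz), (HS z0 S0). reflexivity.
Qed.

Lemma IX_sup_left_determined hr S s T t :
  directed (IX_le le) S -> is_sup (IX_le le) S s ->
  directed (IX_le le) T -> is_sup (IX_le le) T t ->
  (forall w, image (IX_left le hr) S w <-> image (IX_left le hr) T w) ->
  IX_left le hr t = IX_left le hr s.
Proof.
  intros DS Hs DT Ht E.
  assert (EL : image IX_lo S = image IX_lo T).
  { change (image (fun z => IX_lo (IX_left le hr z)) S =
            image (fun z => IX_lo (IX_left le hr z)) T).
    rewrite <- (image_comp (IX_left le hr) IX_lo S), <- (image_comp (IX_left le hr) IX_lo T).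
    f_equal. apply functional_extensionality; intro w; apply propositional_extensionality, E. }
  apply (IX_left_eq_iff hr), (is_sup_unique po (image IX_lo S)).
  - rewrite EL. exact (proj1 (IX_sup_components T t DT Ht)).
  - exact (proj1 (IX_sup_components S s DS Hs)).
Qed.

Lemma IX_sup_right_determined hr S s T t :
  directed (IX_le le) S -> is_sup (IX_le le) S s ->
  directed (IX_le le) T -> is_sup (IX_le le) T t ->
  (forall w, image (IX_right le hr) S w <-> image (IX_right le hr) T w) ->
  IX_right le hr t = IX_right le hr s.
Proof.
  intros DS Hs DT Ht E.
  assert (EH : image IX_hi S = image IX_hi T).
  { change (image (fun z => IX_lo (IX_right le hr z)) S =
            image (fun z => IX_lo (IX_right le hr z)) T).
    rewrite <- (image_comp (IX_right le hr) IX_lo S), <- (image_comp (IX_right le hr) IX_lo T).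
    f_equal. apply functional_extensionality; intro w; apply propositional_extensionality, E. }
  apply (IX_right_eq_iff hr), (is_inf_unique po (image IX_hi S)).
  - rewrite EH. exact (proj2 (IX_sup_components T t DT Ht)).
  - exact (proj2 (IX_sup_components S s DS Hs)).
Qed.

Lemma IX_scott_open_points_interval_open U :
  scott_open (IX_le le) U -> interval_open le (fun z => U (IX_point po z)).
Proof.
  intros [Uup Uin] z Uz.
  destruct (IX_approximants_directed_sup (IX_point po z)) as [D Sz].
  destruct (Uin _ _ D Sz Uz) as [w [[Hlo Hhi] Uw]].
  exists (IX_lo w), (IX_hi w). split; [split; assumption|].
  intros z' [K1 K2]. apply (Uup w); [exact Uw|].
  apply (IX_le_iff po). split; apply (way_below_le po); assumption.
Qed.

Lemma IX_maximal_above_scott_compact x :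
  scott_compact (IX_le le) (fun y => maximal (IX_le le) y /\ IX_le le x y).
Proof.
  intros I U HU Hc.
  destruct (proj2 gh (IX_lo x) (IX_hi x) I (fun i z => U i (IX_point po z))) as [l Hl].
  - intro i. exact (IX_scott_open_points_interval_open _ (HU i)).
  - intros z [h1 h2]. apply Hc. split.
    + apply (IX_maximal_iff po). reflexivity.
    + apply (IX_le_iff po). split; assumption.
  - exists l. intros y [My Hxy]. apply (IX_maximal_iff po) in My. apply (IX_le_iff po) in Hxy.
    replace y with (IX_point po (IX_lo y)) by (apply IX_eq; [reflexivity|exact My]).
    apply Hl. split; [exact (proj1 Hxy)|rewrite My; exact (proj2 Hxy)].
Qed.

Lemma IX_interval_domain hr : interval_domain (IX_le le) (IX_left le hr) (IX_right le hr).
Proof.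
  split; [exact (IX_interval_poset po hr)|].
  split; [exact IX_continuous_dcpo|].
  split; [exact (IX_way_below_maximal_meets hr)|].
  split; [|split; [|split; [|exact IX_maximal_above_scott_compact]]].
  - intro x. rewrite IX_way_above_iff. split; split.
    + intros W y Ey Hyx. apply IX_right_fibre_way_below_iff.
      apply (IX_left_eq_iff hr) in Ey. rewrite Ey.
      exact (way_below_le_trans po _ _ _ W (IX_hi_antitone po _ _ Hyx)).
    + intro Hall.
      apply (IX_right_fibre_way_below_iff hr), Hall; [reflexivity|apply (le_refl IX_po)].
    + intros W y Ey Hyx. apply IX_left_fibre_way_below_iff.
      apply (IX_right_eq_iff hr) in Ey. rewrite Ey.
      exact (le_way_below_trans po _ _ _ (IX_lo_monotone po _ _ Hyx) W).
    + intro Hall.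
      apply (IX_left_fibre_way_below_iff hr), Hall; [reflexivity|apply (le_refl IX_po)].
  - intros p S s HS DS Hs. split; [exact (IX_sup_of_left_fibre hr p S s HS DS Hs)|].
    intros q T t _ DT Ht E. exact (IX_sup_right_determined hr S s T t DS Hs DT Ht E).
  - intros q S s HS DS Hs. split; [exact (IX_sup_of_right_fibre hr q S s HS DS Hs)|].
    intros p T t _ DT Ht E. exact (IX_sup_left_determined hr S s T t DS Hs DT Ht E).
Qed.

End IntervalsOfGloballyHyperbolic.

End Intervals.

Section IntervalMaps.
Context {X Y : Type} {leX : X -> X -> Prop} {leY : Y -> Y -> Prop}
  (ghX : globally_hyperbolic leX) (ghY : globally_hyperbolic leY)
  (f : X -> Y) (hf : monotone leX leY f) (hc : interval_continuous leX leY f).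
Let poX : is_partial_order leX := proj1 (proj1 (proj1 ghX)).
Let poY : is_partial_order leY := proj1 (proj1 (proj1 ghY)).

Lemma fbar_monotone : monotone (IX_le leX) (IX_le leY) (fbar leX leY f hf).
Proof.
  intros x y h. apply (IX_le_iff poX) in h. destruct h as [h1 h2].
  apply (IX_le_iff poY). split; [exact (hf _ _ h1)|exact (hf _ _ h2)].
Qed.

Lemma fbar_preserves_sup S s :
  directed (IX_le leX) S -> is_sup (IX_le leX) S s ->
  is_sup (IX_le leY) (image (fbar leX leY f hf) S) (fbar leX leY f hf s).
Proof.
  intros DS Hs. destruct (IX_sup_components ghX S s DS Hs) as [Hlo Hhi].
  apply (IX_sup_of_components poY); rewrite image_comp.
  - change (is_sup leY (image (fun z => f (IX_lo z)) S) (f (IX_lo s))).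
    rewrite <- (image_comp IX_lo f).
    exact (interval_continuous_preserves_sup (proj1 (proj1 ghX)) ghY f hf hc _ _
             (directed_image _ _ _ S (IX_lo_monotone poX) DS) Hlo).
  - change (is_inf leY (image (fun z => f (IX_hi z)) S) (f (IX_hi s))).
    rewrite <- (image_comp IX_hi f).
    exact (interval_continuous_preserves_inf (proj1 ghX) ghY f hf hc _ _
             (directed_image _ _ _ S (IX_hi_antitone poX) DS) Hhi).
Qed.

Lemma fbar_IN_morphism hrX hrY :
  IN_morphism (IX_le leX) (IX_le leY) (IX_left leX hrX) (IX_right leX hrX)
              (IX_left leY hrY) (IX_right leY hrY) (fbar leX leY f hf).
Proof.
  split; [exact (scott_continuous_of_sup_preserving _ _ _ fbar_monotone fbar_preserves_sup)|].
  split; intro x; apply IX_eq; reflexivity.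
Qed.

End IntervalMaps.

Theorem mainTheorem14 :
  (* object part: I X is an interval domain *)
  (forall (X : Type) (le : X -> X -> Prop) (hr : forall a, le a a),
     globally_hyperbolic le ->
     interval_domain (IX_le le) (IX_left le hr) (IX_right le hr)) /\
  (* arrow part: fbar is an arrow of IN *)
  (forall (X Y : Type) (leX : X -> X -> Prop) (leY : Y -> Y -> Prop)
          (hrX : forall a, leX a a) (hrY : forall a, leY a a)
          (f : X -> Y) (hf : monotone leX leY f),
     globally_hyperbolic leX -> globally_hyperbolic leY ->
     interval_continuous leX leY f ->
     IN_morphism (IX_le leX) (IX_le leY) (IX_left leX hrX) (IX_right leX hrX)
                 (IX_left leY hrY) (IX_right leY hrY) (fbar leX leY f hf)) /\
  (* identities are preserved *)
  (forall (X : Type) (le : X -> X -> Prop) (hid : monotone le le (fun a => a)),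
     globally_hyperbolic le ->
     forall x : IX le, fbar le le (fun a => a) hid x = x) /\
  (* composition is preserved *)
  (forall (X Y Z : Type) (leX : X -> X -> Prop) (leY : Y -> Y -> Prop) (leZ : Z -> Z -> Prop)
          (f : X -> Y) (g : Y -> Z)
          (hf : monotone leX leY f) (hg : monotone leY leZ g)
          (hgf : monotone leX leZ (fun a => g (f a))),
     globally_hyperbolic leX -> globally_hyperbolic leY -> globally_hyperbolic leZ ->
     interval_continuous leX leY f -> interval_continuous leY leZ g ->
     forall x : IX leX,
       fbar leX leZ (fun a => g (f a)) hgf x = fbar leY leZ g hg (fbar leX leY f hf x)).
Proof.
  split; [|split; [|split]].
  - intros X le hr gh. exact (IX_interval_domain gh hr).
  - intros X Y leX leY hrX hrY f hf ghX ghY hc. exact (fbar_IN_morphism ghX ghY f hf hc hrX hrY).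
  - intros X le hid _ x. apply IX_eq; reflexivity.
  - intros. apply IX_eq; reflexivity.
Qed.
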